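(* Let $X$ be a $T_1$ topological space. The following are equivalent: (1) $T''(X)$ is a regular ring; (2) every prime ideal of $T''(X)$ is maximal; (3) for every $f\in T''(X)$ there exists $g\in T''(X)$ with $Z(f)=X\setminus Z(g)$; (4) for each $Z\in Z''[X]$ there exists a dense cozero set $U$ in $X$ such that $Z\cap U$ is clopen in $U$; (5) every ideal of $T''(X)$ is a $z$-ideal of $T''(X)$; (6) every ideal of $T''(X)$ is an intersection of prime ideals of $T''(X)$; (7) every ideal of $T''(X)$ is an intersection of maximal ideals of $T''(X)$; (8) for all $f,g\in T''(X)$, $\langle f,g\rangle=\langle f^2+g^2\rangle$; (9) every principal ideal of $T''(X)$ is generated by an idempotent.
   Context: $C(X)$ is the ring of real-valued continuous functions on $X$; a cozero set is a set $\{x: h(x)\neq 0\}$ with $h\in C(X)$. $T''(X)$ is the ring (under pointwise operations) of all functions $f\colon X\to\mathbb{R}$ for which there is a dense cozero set $U$ of $X$ with $f|_U$ continuous. For $f\colon X\to\mathbb{R}$, $Z(f)=\{x: f(x)=0\}$, and $Z''[X]=\{Z(f): f\in T''(X)\}$. A commutative ring $R$ is regular if for each $a\in R$ there is $x\in R$ with $a=a^2x$. In a commutative ring with unity, $M(a)$ is the intersection of all maximal ideals containing $a$, and an ideal $I$ is a $z$-ideal if $M(a)\subseteq I$ for all $a\in I$. $\langle\cdot\rangle$ denotes the ideal generated. *)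

From HB Require Import structures.
From mathcomp Require Import all_boot all_order all_algebra.
From mathcomp Require Import all_classical all_reals all_analysis.
Set Implicit Arguments. Unset Strict Implicit. Unset Printing Implicit Defensive.
Import Order.TTheory GRing.Theory Num.Theory.
Import numFieldNormedType.Exports.
Local Open Scope classical_set_scope.
Local Open Scope ring_scope.

Section Tpp.
Variables (R : realType) (X : topologicalType).

Definition cozero (U : set X) : Prop :=
  exists h : X -> R, continuous h /\ U = [set x | h x != 0].

Definition Tpp : set (X -> R) :=
  [set f | exists U : set X, [/\ cozero U, dense U & {within U, continuous f}]].

Definition Zset (f : X -> R) : set X := [set x | f x = 0].

Definition Zpp : set (set X) := [set Z | exists f, Tpp f /\ Z = Zset f].

Definition fmul (f g : X -> R) : X -> R := fun x => f x * g x.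
Definition fadd (f g : X -> R) : X -> R := fun x => f x + g x.
Definition fopp (f : X -> R) : X -> R := fun x => - f x.

Definition ideal (I : set (X -> R)) : Prop :=
  [/\ I `<=` Tpp, I (fun _ => 0),
      (forall f g, I f -> I g -> I (fadd f g)),
      (forall f, I f -> I (fopp f)) &
      (forall f g, Tpp g -> I f -> I (fmul g f))].

Definition prime_ideal (P : set (X -> R)) : Prop :=
  [/\ ideal P, P <> Tpp &
      forall f g, Tpp f -> Tpp g -> P (fmul f g) -> P f \/ P g].

Definition maximal_ideal (M : set (X -> R)) : Prop :=
  [/\ ideal M, M <> Tpp &
      forall J, ideal J -> M `<=` J -> J = M \/ J = Tpp].

Definition gen (S : set (X -> R)) : set (X -> R) :=
  [set h | Tpp h /\ forall I, ideal I -> S `<=` I -> I h].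

Definition regular_ring : Prop :=
  forall a, Tpp a -> exists x, Tpp x /\ a = fmul (fmul a a) x.

Definition Mset (a : X -> R) : set (X -> R) :=
  [set f | Tpp f /\ forall M, maximal_ideal M -> M a -> M f].

Definition z_ideal (I : set (X -> R)) : Prop :=
  ideal I /\ forall a, I a -> Mset a `<=` I.

Definition intersection_of (P : set (X -> R) -> Prop) (I : set (X -> R)) : Prop :=
  exists F : set (set (X -> R)), (forall J, F J -> P J) /\
    I = [set f | Tpp f /\ forall J, F J -> J f].

Definition idempotent_fn (e : X -> R) : Prop := Tpp e /\ fmul e e = e.

Definition clopen_in (U A : set X) : Prop :=
  (exists O, open O /\ A `&` U = O `&` U) /\
  (exists C, closed C /\ A `&` U = C `&` U).

End Tpp.

(* Everything rests on the pointwise inverse f^-1 (with 0^-1 = 0): T''(X) is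
   regular iff it is closed under f |-> f^-1, because a = a^2 x forces
   x = a^-1 off Z(a).  In a regular T''(X) a function k vanishing on Z(h) is
   the multiple (k h^-1) h of h, and h h^-1 is an idempotent generating (h);
   this yields (3), (5), (8), (9) and, via prime avoidance, (6) and (7).
   Conversely (5)-(9) each force a into (a^2) because prime ideals are
   radical, while (3) and (4) exhibit a^-1 directly as an element of T''(X). *)

From HB Require Import structures.
From mathcomp Require Import all_boot all_order all_algebra.
From mathcomp Require Import all_classical all_reals all_analysis.
From mathcomp Require Import ring.
Import Order.TTheory GRing.Theory Num.Theory.
Import numFieldNormedType.Exports.
Local Open Scope classical_set_scope.
Local Open Scope ring_scope.

Section TppRing.
#[local] Set Implicit Arguments.
#[local] Unset Strict Implicit.
Variables (R : realType) (X : topologicalType).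
Local Notation T := (@Tpp R X).
Local Notation cozero := (@cozero R X).
Local Notation regular := (@regular_ring R X).
Local Notation Zpp := (@Zpp R X).
Local Notation zero := (fun _ : X => 0 : R).
Local Notation one := (fun _ : X => 1 : R).
Implicit Types (U V : set X) (a b e f g h k r s : X -> R) (I J K M P S : set (X -> R)).

Ltac fun_ring := apply: funext => ?; rewrite /fmul /fadd /fopp /=; ring.

Lemma cozero_open U : cozero U -> open U.
Proof.
move=> [h [hc ->]]; rewrite -[X in open X]/(h @^-1` [set y | y != 0]).
by apply: open_comp; [move=> x _; apply: hc | exact: open_neq].
Qed.

Lemma cozeroT : cozero setT.
Proof.
exists one; split; first by move=> x; apply: cvg_cst.
by apply/seteqP; split => x //= _; rewrite oner_neq0.
Qed.

Lemma cozeroI U V : cozero U -> cozero V -> cozero (U `&` V).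
Proof.
move=> [h [hc ->]] [k [kc ->]]; exists (fmul h k); split.
  by move=> x; apply: cvgM; [apply: hc | apply: kc].
by apply/seteqP; split => x /=; rewrite /fmul mulf_eq0 negb_or => /andP.
Qed.

Lemma TppP f :
  T f <-> exists U, [/\ cozero U, dense U & forall x, U x -> {for x, continuous f}].
Proof.
split=> -[U [cU dU fU]]; exists U; split => //;
  move: fU; rewrite continuous_open_subspace; try exact: cozero_open.
- by move=> fU x Ux; apply: fU; rewrite inE.
- by move=> fU x; rewrite inE => /fU.
Qed.

Lemma Tpp_common_domain f g : T f -> T g -> exists U, [/\ cozero U, dense U,
  forall x, U x -> {for x, continuous f} & forall x, U x -> {for x, continuous g}].
Proof.
move=> /TppP [U [cU dU fU]] /TppP [V [cV dV gV]].
exists (U `&` V); split; first exact: cozeroI.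
- by apply: denseI => //; exact: cozero_open.
- by move=> x [Ux _]; apply: fU.
- by move=> x [_ Vx]; apply: gV.
Qed.

Lemma Tpp_cst c : T (fun _ => c).
Proof.
apply/TppP; exists setT; split; first exact: cozeroT.
- by move=> O [x Ox] _; exists x.
- by move=> x _; apply: cvg_cst.
Qed.

Lemma Tpp_add f g : T f -> T g -> T (fadd f g).
Proof.
move=> Tf Tg; have [U [cU dU fU gU]] := Tpp_common_domain Tf Tg.
by apply/TppP; exists U; split => // x Ux; apply: cvgD; [apply: fU | apply: gU].
Qed.

Lemma Tpp_mul f g : T f -> T g -> T (fmul f g).
Proof.
move=> Tf Tg; have [U [cU dU fU gU]] := Tpp_common_domain Tf Tg.
by apply/TppP; exists U; split => // x Ux; apply: cvgM; [apply: fU | apply: gU].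
Qed.

Lemma Tpp_opp f : T f -> T (fopp f).
Proof.
by move=> /TppP [U [cU dU fU]]; apply/TppP; exists U; split => // x /fU /cvgN.
Qed.

Lemma Tpp_exp a n : T a -> T (fun x => a x ^+ n).
Proof.
move=> Ta; elim: n => [|n IHn]; first exact: Tpp_cst.
have -> : (fun x => a x ^+ n.+1) = fmul a (fun x => a x ^+ n).
  by apply: funext => x; rewrite /fmul exprS.
exact: Tpp_mul.
Qed.

Definition finv f : X -> R := fun x => (f x)^-1.

Lemma Tpp_finv_nonvanishing h : T h -> (forall x, h x != 0) -> T (finv h).
Proof.
move=> /TppP [U [cU dU hU]] h0; apply/TppP; exists U; split => // x Ux.
by apply: cvgV; [apply: h0 | apply: hU].
Qed.

Lemma ideal_subTpp I : ideal I -> I `<=` T. Proof. by case. Qed.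
Lemma ideal0 I : ideal I -> I zero. Proof. by case. Qed.

Lemma idealD I f g : ideal I -> I f -> I g -> I (fadd f g).
Proof. by case=> _ _ + _ _; apply. Qed.

Lemma idealMl I f g : ideal I -> T g -> I f -> I (fmul g f).
Proof. by case=> _ _ _ _; apply. Qed.

Lemma ideal_eqTpp I : ideal I -> I one -> I = T.
Proof.
move=> II I1; apply/seteqP; split; first exact: ideal_subTpp.
move=> f Tf; have -> : f = fmul f one by fun_ring.
exact: idealMl.
Qed.

Definition pideal a := [set fmul r a | r in T].

Lemma ideal_pideal a : T a -> ideal (pideal a).
Proof.
move=> Ta; split.
- by move=> _ [r Tr <-]; exact: Tpp_mul.
- by exists zero; [exact: Tpp_cst | fun_ring].
- by move=> _ _ [r Tr <-] [s Ts <-]; exists (fadd r s); [exact: Tpp_add | fun_ring].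
- by move=> _ [r Tr <-]; exists (fopp r); [exact: Tpp_opp | fun_ring].
- by move=> _ g Tg [r Tr <-]; exists (fmul g r); [exact: Tpp_mul | fun_ring].
Qed.

Lemma pideal_id a : pideal a a.
Proof. by exists one; [exact: Tpp_cst | fun_ring]. Qed.

Lemma ideal_gen S : ideal (gen S).
Proof.
split.
- by move=> h [].
- by split=> [|I /ideal0 //]; exact: Tpp_cst.
- move=> f g [Tf If] [Tg Ig]; split; first exact: Tpp_add.
  by move=> I II SI; apply: idealD => //; [exact: If | exact: Ig].
- move=> f [Tf If]; split; first exact: Tpp_opp.
  by move=> I II SI; case: (II) => _ _ _ + _; apply; exact: If.
- move=> f g Tg [Tf If]; split; first exact: Tpp_mul.
  by move=> I II SI; apply: idealMl => //; exact: If.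
Qed.

Lemma sub_gen S : S `<=` T -> S `<=` gen S.
Proof. by move=> ST f Sf; split=> [|I _]; [exact: ST | apply]. Qed.

Lemma gen_min S I : ideal I -> S `<=` I -> gen S `<=` I.
Proof. by move=> II SI f [_]; apply. Qed.

Lemma gen1E a : T a -> gen [set a] = pideal a.
Proof.
move=> Ta; apply/seteqP; split.
  by apply: gen_min; [exact: ideal_pideal | move=> _ ->; exact: pideal_id].
move=> _ [r Tr <-]; apply: idealMl (ideal_gen _) Tr _.
by apply: sub_gen => // _ ->.
Qed.

Definition adjoin I a := [set fadd m (fmul r a) | m in I & r in T].

Lemma ideal_adjoin I a : ideal I -> T a -> ideal (adjoin I a).
Proof.
move=> II Ta; split.
- move=> _ [m Im [r Tr <-]]; apply: Tpp_add; last exact: Tpp_mul.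
  exact: ideal_subTpp Im.
- exists zero; first exact: ideal0.
  by exists zero; [exact: Tpp_cst | fun_ring].
- move=> _ _ [m Im [r Tr <-]] [m' Im' [r' Tr' <-]].
  exists (fadd m m'); first exact: idealD.
  by exists (fadd r r'); [exact: Tpp_add | fun_ring].
- move=> _ [m Im [r Tr <-]]; exists (fopp m); first by case: II => _ _ _ + _; apply.
  by exists (fopp r); [exact: Tpp_opp | fun_ring].
- move=> _ g Tg [m Im [r Tr <-]]; exists (fmul g m); first exact: idealMl.
  by exists (fmul g r); [exact: Tpp_mul | fun_ring].
Qed.

Lemma sub_adjoin I a : ideal I -> I `<=` adjoin I a.
Proof.
move=> II m Im; exists m => //.
by exists zero; [exact: Tpp_cst | fun_ring].
Qed.

Lemma adjoin_id I a : ideal I -> adjoin I a a.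
Proof.
move=> II; exists zero; first exact: ideal0.
by exists one; [exact: Tpp_cst | fun_ring].
Qed.

Lemma maximal_ideal_comaximal M a : maximal_ideal M -> T a -> ~ M a ->
  exists2 m, M m & exists2 r, T r & fadd m (fmul r a) = one.
Proof.
move=> [IM _ Mmax] Ta Ma.
have [Madj|adjT] := Mmax _ (ideal_adjoin IM Ta) (sub_adjoin a IM).
  by have := adjoin_id a IM; rewrite Madj.
have : adjoin M a one by rewrite adjT; exact: Tpp_cst.
by move=> [m Mm [r Tr mra]]; exists m => //; exists r.
Qed.

Lemma maximal_prime M : maximal_ideal M -> prime_ideal M.
Proof.
move=> MM; have [IM MT _] := MM; split => // f g Tf Tg Mfg.
have [Mf|Mf] := pselect (M f); [by left | right].
have [m Mm [r Tr mrf1]] := maximal_ideal_comaximal MM Tf Mf.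
have -> : g = fadd (fmul g m) (fmul r (fmul f g)).
  apply: funext => x; have /(congr1 (fun h => h x)) := mrf1.
  by rewrite /fmul /fadd => mrf1x; rewrite -[LHS]mulr1 -mrf1x; ring.
by apply: idealD => //; apply: idealMl.
Qed.

Definition vanishing_at x := [set f | T f /\ f x = 0].

Lemma ideal_vanishing_at x : ideal (vanishing_at x).
Proof.
split.
- by move=> f [].
- by split; [exact: Tpp_cst |].
- by move=> f g [Tf fx] [Tg gx]; split; [exact: Tpp_add | rewrite /fadd fx gx addr0].
- by move=> f [Tf fx]; split; [exact: Tpp_opp | rewrite /fopp fx oppr0].
- by move=> f g Tg [Tf fx]; split; [exact: Tpp_mul | rewrite /fmul fx mulr0].
Qed.

Lemma maximal_vanishing_at x : maximal_ideal (vanishing_at x).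
Proof.
split; first exact: ideal_vanishing_at.
  by move=> IT; have := Tpp_cst (1 : R); rewrite -IT => -[_ /eqP]; rewrite oner_eq0.
move=> J IJ xJ; have [Jx|] := pselect (J `<=` vanishing_at x).
  by left; apply/seteqP; split.
move=> /existsNP [g /not_implyP [Jg gx]]; right.
have Tg := ideal_subTpp IJ Jg.
have gx0 : g x != 0 by apply/eqP => gx0; apply: gx.
apply/seteqP; split; first exact: ideal_subTpp.
move=> h Th; pose c := h x / g x.
have -> : h = fadd (fadd h (fopp (fmul (fun _ => c) g))) (fmul (fun _ => c) g) by fun_ring.
apply: idealD => //; last by apply: idealMl => //; exact: Tpp_cst.
apply: xJ; split; first by apply: Tpp_add => //; apply: Tpp_opp; apply: Tpp_mul => //; exact: Tpp_cst.
by rewrite /fadd /fopp /fmul /c divfK // subrr.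
Qed.

Lemma Mset_Zset_sub a b : T a -> Mset a b -> Zset a `<=` Zset b.
Proof. by move=> Ta [_ Mab] x ax; have [] := Mab _ (maximal_vanishing_at x). Qed.

Definition avoiding K S J := [/\ ideal J, K `<=` J & forall f, J f -> ~ S f].

Lemma bigcup_avoiding K S (F : set (set (X -> R))) :
  (forall J, F J -> J = set0 \/ avoiding K S J) -> total_on F subset ->
  \bigcup_(J in F) J !=set0 -> avoiding K S (\bigcup_(J in F) J).
Proof.
move=> FP Ftot [f0 [J0 FJ0 J0f0]].
have member_avoiding J f : F J -> J f -> avoiding K S J.
  by move=> FJ Jf; case: (FP J FJ) => // Jempty; rewrite Jempty in Jf.
have common f g : (\bigcup_(J in F) J) f -> (\bigcup_(J in F) J) g ->
    exists2 J, F J & [/\ avoiding K S J, J f & J g].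
  move=> [J1 FJ1 J1f] [J2 FJ2 J2g].
  have [J12|J21] := Ftot _ _ FJ1 FJ2.
    by exists J2 => //; split => //; [exact: member_avoiding J2g | exact: J12].
  by exists J1 => //; split => //; [exact: member_avoiding J1f | exact: J21].
have [[_ J00 _ _ _] KJ0 _] := member_avoiding _ _ FJ0 J0f0.
split; [split| |].
- move=> f Uf; have [J _ [[IJ _ _] Jf _]] := common f f Uf Uf.
  exact: ideal_subTpp IJ _ Jf.
- by exists J0.
- move=> f g Uf Ug; have [J FJ [[IJ _ _] Jf Jg]] := common f g Uf Ug.
  by exists J => //; exact: idealD.
- move=> f [J FJ Jf]; have [[_ _ _ JN _] _ _] := member_avoiding _ _ FJ Jf.
  by exists J => //; exact: JN.
- move=> f g Tg [J FJ Jf]; have [IJ _ _] := member_avoiding _ _ FJ Jf.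
  by exists J => //; exact: idealMl.
- by move=> f Kf; exists J0 => //; exact: KJ0.
- by move=> f [J FJ Jf]; have [_ _] := member_avoiding _ _ FJ Jf; apply.
Qed.

Section PrimeAvoidance.
Variables (K S : set (X -> R)).
Hypotheses (IK : ideal K) (ST : S `<=` T) (S_neq0 : S !=set0)
  (SM : forall a b, S a -> S b -> S (fmul a b)) (KS : forall f, K f -> ~ S f).

Lemma maximal_avoiding_prime J : avoiding K S J ->
  (forall J', J `<` J' -> ~ avoiding K S J') -> prime_ideal J.
Proof.
move=> [IJ KJ JS] Jmax; split => //.
  by move=> JT; case: S_neq0 => s Ss; apply: (JS s) => //; rewrite JT; exact: ST.
have meets_S a : T a -> ~ J a -> exists2 m, J m & exists2 r, T r & S (fadd m (fmul r a)).
  move=> Ta Ja; apply: contrapT => noS; apply: (Jmax (adjoin J a)).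
    by split; [exact: sub_adjoin | move=> /(_ a (adjoin_id a IJ))].
  split; [exact: ideal_adjoin | exact: subset_trans (sub_adjoin a IJ) |].
  by move=> _ [m Jm [r Tr <-]] Smr; apply: noS; exists m => //; exists r.
move=> f g Tf Tg Jfg; apply: contrapT => /not_orP [Jf Jg].
have [m1 Jm1 [r1 Tr1 S1]] := meets_S f Tf Jf.
have [m2 Jm2 [r2 Tr2 S2]] := meets_S g Tg Jg.
suff Jprod : J (fmul (fadd m1 (fmul r1 f)) (fadd m2 (fmul r2 g))).
  by apply: (JS _ Jprod); apply: SM.
have Tm1 := ideal_subTpp IJ Jm1.
have -> : fmul (fadd m1 (fmul r1 f)) (fadd m2 (fmul r2 g)) =
    fadd (fadd (fmul (fadd m1 (fmul r1 f)) m2) (fmul (fmul r2 g) m1))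
         (fmul (fmul r2 r1) (fmul f g)) by fun_ring.
apply: idealD => //; first apply: idealD => //; apply: idealMl => //.
- by apply: Tpp_add => //; exact: Tpp_mul.
- exact: Tpp_mul.
- exact: Tpp_mul.
Qed.

Lemma prime_avoidance : exists P, [/\ prime_ideal P, K `<=` P & forall f, P f -> ~ S f].
Proof.
pose candidates := [set J | J = set0 \/ avoiding K S J].
have [|A [cA Amax]] := @Zorn_bigcup _ candidates.
  move=> F Fc Ftot; have [->|/eqP/set0P Fne] := pselect (\bigcup_(J in F) J = set0).
    by left.
  by right; exact: bigcup_avoiding.
have [A0|avA] := cA.
  exfalso; apply: (Amax K); last by right; split.
  by rewrite A0; split=> [//|/(_ _ (ideal0 IK))].
exists A; have [_ KA AS] := avA; split => //.
by apply: maximal_avoiding_prime => // J AJ avJ; apply: (Amax J AJ); right.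
Qed.

End PrimeAvoidance.

Definition supp_ind f := fmul f (finv f).

Lemma supp_indE f x : supp_ind f x = (f x != 0)%:R.
Proof. by rewrite /supp_ind /fmul /finv; case: eqVneq => [->|/divff]; rewrite ?mul0r. Qed.

Lemma supp_ind_id f : fmul f (supp_ind f) = f.
Proof.
by apply: funext => x; rewrite /fmul supp_indE; case: eqVneq => [->|]; rewrite ?mulr0 ?mulr1.
Qed.

Lemma supp_ind_idem f : fmul (supp_ind f) (supp_ind f) = supp_ind f.
Proof. by apply: funext => x; rewrite /fmul supp_indE; case: (f x != 0); rewrite ?mulr0 ?mulr1. Qed.

Lemma regularP : regular <-> forall f, T f -> T (finv f).
Proof.
split=> [reg f Tf | Tinv f Tf].
  have [r [Tr frr]] := reg f Tf.
  suff -> : finv f = fmul f (fmul r r) by apply: Tpp_mul => //; exact: Tpp_mul.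
  apply: funext => x; have /(congr1 (fun h => h x)) := frr; rewrite /fmul /finv.
  have [->|fx0 fxE] := eqVneq (f x) 0; first by rewrite invr0 !mul0r.
  have fr1 : f x * r x = 1 by apply: (mulfI fx0); rewrite mulr1 mulrA -fxE.
  have -> : r x = (f x)^-1 by rewrite -[r x]mul1r -(mulVf fx0) -mulrA fr1 mulr1.
  by rewrite mulrA divff // mul1r.
exists (finv f); split; first exact: Tinv.
by rewrite -[in LHS](supp_ind_id f) /supp_ind; fun_ring.
Qed.

Lemma Tpp_finv f : regular -> T f -> T (finv f).
Proof. by move=> /regularP; apply. Qed.

Lemma Tpp_supp_ind f : regular -> T f -> T (supp_ind f).
Proof. by move=> reg Tf; apply: Tpp_mul => //; exact: Tpp_finv. Qed.

Lemma Zset_sub_pideal h k : regular -> T h -> T k -> Zset h `<=` Zset k -> pideal h k.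
Proof.
move=> reg Th Tk hk; exists (fmul k (finv h)); first by apply: Tpp_mul => //; exact: Tpp_finv.
apply: funext => x; rewrite /fmul /finv.
have [hx0|hx0] := eqVneq (h x) 0; last by rewrite -mulrA mulVf ?mulr1.
by rewrite (hk x hx0) !mul0r.
Qed.

Lemma regular_from_pideal_sq : (forall a, T a -> pideal (fmul a a) a) -> regular.
Proof.
move=> sq a Ta; have [r Tr raa] := sq a Ta; exists r; split => //.
by rewrite -[in LHS]raa; fun_ring.
Qed.

Lemma prime_ideal_sq P a : prime_ideal P -> T a -> P (fmul a a) -> P a.
Proof. by move=> [_ _ Pprime] Ta /Pprime; case. Qed.

Lemma regular_prime_maximal P : regular -> prime_ideal P -> maximal_ideal P.
Proof.
move=> reg PP; have [IP PT Pprime] := PP; split => // J IJ PJ.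
have [JP|/existsNP [a /not_implyP [Ja Pa]]] := pselect (J `<=` P).
  by left; apply/seteqP; split.
right; have Ta := ideal_subTpp IJ Ja.
pose b := fadd one (fopp (supp_ind a)).
have Tb : T b by apply: Tpp_add; [exact: Tpp_cst | apply: Tpp_opp; exact: Tpp_supp_ind].
have Pb : P b.
  suff Pab : P (fmul a b) by case: (Pprime a b Ta Tb Pab).
  suff -> : fmul a b = zero by exact: ideal0.
  apply: funext => x; rewrite /b /fmul /fadd /fopp supp_indE.
  by case: eqVneq => [->|_] /=; rewrite ?mul0r // subrr mulr0.
apply: ideal_eqTpp => //.
have -> : one = fadd b (fmul (finv a) a) by rewrite /b /supp_ind; fun_ring.
exact: idealD IJ (PJ _ Pb) (idealMl IJ (Tpp_finv reg Ta) Ja).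
Qed.

Lemma ideal_zero : ideal [set zero].
Proof.
split=> //.
- by move=> _ ->; exact: Tpp_cst.
- by move=> _ _ -> ->; fun_ring.
- by move=> _ ->; fun_ring.
- by move=> _ g _ ->; fun_ring.
Qed.

(* If a is not regular, a prime ideal avoiding the multiplicative set
   {a^n (1 - r a)} cannot be maximal: it misses a (n = 1, r = 0), and a
   relation 1 = m + r a would put m = 1 - r a (n = 0) inside it. *)
Lemma prime_maximal_regular :
  (forall P, prime_ideal P -> maximal_ideal P) -> regular.
Proof.
move=> prime_max a Ta; apply: contrapT => a_irregular.
pose S := [set fmul (fun x => a x ^+ n) (fadd one (fopp (fmul r a))) | n in setT & r in T].
have ST : S `<=` T.
  move=> _ [n _ [r Tr <-]]; apply: Tpp_mul; first exact: Tpp_exp.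
  by apply: Tpp_add; [exact: Tpp_cst | apply: Tpp_opp; exact: Tpp_mul].
have SM a1 b1 : S a1 -> S b1 -> S (fmul a1 b1).
  move=> [n _ [r Tr <-]] [m _ [s Ts <-]]; exists (n + m)%N => //.
  exists (fadd (fadd r s) (fopp (fmul (fmul r s) a))).
    apply: Tpp_add; first exact: Tpp_add.
    by apply: Tpp_opp; apply: Tpp_mul => //; exact: Tpp_mul.
  by apply: funext => x; rewrite /fmul /fadd /fopp exprD; ring.
have S0 f : [set zero] f -> ~ S f.
  move=> -> [n _ [r Tr rna0]]; apply: a_irregular; exists r; split => //.
  apply: funext => x; have /(congr1 (fun h => h x)) := rna0.
  rewrite /fmul /fadd /fopp; have [->|ax0] := eqVneq (a x) 0; first by rewrite !mul0r.
  move/eqP; rewrite mulf_eq0 expf_eq0 (negPf ax0) andbF /= subr_eq0 => /eqP ra1.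
  by rewrite -mulrA [a x * r x]mulrC -ra1 mulr1.
have S_neq0 : S !=set0 by eexists; exists 0%N => //; exists zero => //; exact: Tpp_cst.
have [P [PP _ PS]] := prime_avoidance ideal_zero ST S_neq0 SM S0.
have [Pa|Pa] := pselect (P a).
  apply: PS Pa _; exists 1%N => //; exists zero; first exact: Tpp_cst.
  by apply: funext => x; rewrite /fmul /fadd /fopp expr1; ring.
have [m Pm [r Tr mra1]] := maximal_ideal_comaximal (prime_max P PP) Ta Pa.
apply: PS Pm _; exists 0%N => //; exists r => //.
apply: funext => x; have /(congr1 (fun h => h x)) := mra1.
by rewrite /fmul /fadd /fopp /= expr0 mul1r => <-; rewrite addrK.
Qed.

Lemma regular_Zset_complement f : regular -> T f ->
  exists g, T g /\ Zset f = ~` Zset g.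
Proof.
move=> reg Tf; exists (fadd one (fopp (supp_ind f))); split.
  by apply: Tpp_add; [exact: Tpp_cst | apply: Tpp_opp; exact: Tpp_supp_ind].
apply/seteqP; split => x; rewrite /Zset /fadd /fopp /= supp_indE.
  by move=> ->; rewrite eqxx subr0; exact/eqP/oner_neq0.
by case: eqVneq => // _ /=; rewrite subrr => /(_ erefl).
Qed.

(* Z(f) = X \ Z(g) makes f + g nowhere zero, and f^-1 = f (f + g)^-2. *)
Lemma Zset_complement_regular :
  (forall f, T f -> exists g, T g /\ Zset f = ~` Zset g) -> regular.
Proof.
move=> compl; apply/regularP => f Tf; have [g [Tg fg]] := compl f Tf.
have fg0 x : f x = 0 <-> g x != 0.
  have : Zset f x <-> (~` Zset g) x by rewrite fg.
  by move=> fgx; split => [/fgx /eqP | /eqP /fgx].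
have gx0 x : f x != 0 -> g x = 0.
  by move=> fx0; apply/eqP; apply: contraNT fx0 => /fg0 ->.
have fgx0 x : fadd f g x != 0.
  rewrite /fadd; have [fx0|fx0] := eqVneq (f x) 0; last by rewrite gx0 ?addr0.
  by rewrite fx0 add0r; apply/fg0.
have -> : finv f = fmul f (fmul (finv (fadd f g)) (finv (fadd f g))).
  apply: funext => x; rewrite /fmul /finv /fadd.
  have [->|fx0] := eqVneq (f x) 0; first by rewrite invr0 mul0r.
  by rewrite gx0 // addr0 mulrA divff ?mul1r.
have Tinv := Tpp_finv_nonvanishing (Tpp_add Tf Tg) fgx0.
by apply: Tpp_mul => //; exact: Tpp_mul.
Qed.

Lemma near_neq f x c : {for x, continuous f} -> f x != c -> \forall y \near x, f y != c.
Proof.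
move=> fx fxc; apply: (fx [set z | z != c]).
by apply: open_nbhs_nbhs; split; [exact: open_neq | exact: fxc].
Qed.

(* On a domain U of continuity of f and of its support indicator, Z(f) is
   relatively open (the indicator is locally 0) and relatively closed (f is
   locally nonzero off Z(f)). *)
Lemma regular_Zset_clopen Z : regular -> Zpp Z ->
  exists U, [/\ cozero U, dense U & clopen_in U Z].
Proof.
move=> reg [f [Tf ->]].
have [U [cU dU fU eU]] := Tpp_common_domain Tf (Tpp_supp_ind reg Tf).
exists U; split => //; split.
- exists (interior (Zset f)); split; first exact: open_interior.
  apply/seteqP; split => x [fx0 Ux]; split => //; last exact: interior_subset.
  have ex1 : supp_ind f x != 1 by rewrite supp_indE fx0 eqxx eq_sym oner_eq0.
  apply: filterS (near_neq (eU x Ux) ex1) => y.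
  by rewrite supp_indE /Zset /=; case: (eqVneq (f y) 0) => //= _; rewrite eqxx.
- exists (~` interior (~` Zset f)); split; first exact/open_closedC/open_interior.
  apply/seteqP; split => x [fx0 Ux]; split => //; first by move=> /interior_subset.
  apply: contrapT => /eqP fx_neq0; apply: fx0.
  by apply: filterS (near_neq (fU x Ux) fx_neq0) => y /eqP.
Qed.

Lemma Zset_clopen_regular :
  (forall Z, Zpp Z -> exists U, [/\ cozero U, dense U & clopen_in U Z]) -> regular.
Proof.
move=> clopen; apply/regularP => f Tf.
have [U [cU dU [[W [oW ZW]] _]]] := clopen _ (ex_intro _ f (conj Tf erefl)).
have /TppP [V [cV dV fV]] := Tf.
apply/TppP; exists (U `&` V); split; [exact: cozeroI | exact: denseI (cozero_open cU) dU dV |].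
move=> x [Ux Vx]; have [fx0|fx0] := eqVneq (f x) 0; last exact: cvgV (fV x Vx).
change (finv f @ x --> finv f x); have -> : finv f x = 0 by rewrite /finv fx0 invr0.
apply: cvg_near_cst.
have WUx : (W `&` U) x by rewrite -ZW.
have : nbhs x (W `&` U) by apply: open_nbhs_nbhs; split => //; exact: openI oW (cozero_open cU).
apply: filterS => y; rewrite -ZW => -[fy0 _].
by rewrite /finv (fy0 : f y = 0) invr0.
Qed.

Lemma regular_z_ideal I : regular -> ideal I -> z_ideal I.
Proof.
move=> reg II; split => // a Ia b Mab; have Ta := ideal_subTpp II Ia.
have [r Tr <-] := Zset_sub_pideal reg Ta Mab.1 (Mset_Zset_sub Ta Mab).
exact: idealMl.
Qed.

Lemma z_ideal_regular : (forall I, ideal I -> z_ideal I) -> regular.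
Proof.
move=> zI; apply: regular_from_pideal_sq => a Ta; have Taa := Tpp_mul Ta Ta.
have Maa : Mset (fmul a a) a.
  by split => // M MM; exact: prime_ideal_sq (maximal_prime MM) Ta.
exact: (zI _ (ideal_pideal Taa)).2 _ (pideal_id _) _ Maa.
Qed.

(* If h lies outside I, its support indicator e (with h = h e) lies outside
   I too; a prime ideal over I avoiding {e} is maximal and misses h. *)
Lemma regular_intersection_maximal I : regular -> ideal I ->
  intersection_of (@maximal_ideal R X) I.
Proof.
move=> reg II; exists [set M | maximal_ideal M /\ I `<=` M]; split; first by move=> J [].
apply/seteqP; split=> [f If | h [Th hM]].
  by split=> [|J [_ IJ]]; [exact: ideal_subTpp If | exact: IJ].
apply: contrapT => Ih; pose e := supp_ind h.
have Ie f : I f -> ~ [set e] f.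
  by move=> If ef; apply: Ih; rewrite -(supp_ind_id h) -/e -ef; exact: idealMl.
have eM a b : [set e] a -> [set e] b -> [set e] (fmul a b) by move=> -> ->; exact: supp_ind_idem.
have eT : [set e] `<=` T by move=> _ ->; exact: Tpp_supp_ind.
have [P [PP IP Pe]] := prime_avoidance II eT (ex_intro _ e erefl) eM Ie.
apply: (Pe e) => //; have -> : e = fmul (finv h) h by rewrite /e /supp_ind; fun_ring.
by apply: idealMl (hM P (conj (regular_prime_maximal reg PP) IP)); [case: PP | exact: Tpp_finv].
Qed.

Lemma regular_intersection_prime I : regular -> ideal I ->
  intersection_of (@prime_ideal R X) I.
Proof.
move=> reg II; have [F [FM ->]] := regular_intersection_maximal reg II.
by exists F; split => // J /FM; exact: maximal_prime.
Qed.

Lemma intersection_prime_regular (Q : set (X -> R) -> Prop) :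
  (forall J, Q J -> prime_ideal J) ->
  (forall I, ideal I -> intersection_of Q I) -> regular.
Proof.
move=> Qprime Qint; apply: regular_from_pideal_sq => a Ta; have Taa := Tpp_mul Ta Ta.
have [F [FQ E]] := Qint _ (ideal_pideal Taa).
have [_ Faa] : [set f | T f /\ forall J, F J -> J f] (fmul a a) by rewrite -E; exact: pideal_id.
rewrite E; split => // J FJ.
exact: prime_ideal_sq (Qprime J (FQ J FJ)) Ta (Faa J FJ).
Qed.

Lemma regular_gen2 f g : regular -> T f -> T g ->
  gen [set f; g] = gen [set (fun x => f x ^+ 2 + g x ^+ 2)].
Proof.
move=> reg Tf Tg; set h := fun x => _.
have hE : h = fadd (fmul f f) (fmul g g) by apply: funext => x; rewrite /h /fadd /fmul !expr2.
have Th : T h by rewrite hE; apply: Tpp_add; exact: Tpp_mul.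
have fgT : [set f; g] `<=` T by move=> _ [|] ->.
apply/seteqP; split; apply: gen_min; try exact: ideal_gen.
  rewrite gen1E // => k fgk; apply: Zset_sub_pideal (fgT k fgk) _ => // x /eqP.
  rewrite /h paddr_eq0 ?sqr_ge0 // !sqrf_eq0 => /andP [/eqP fx0 /eqP gx0].
  by case: fgk => ->.
move=> _ ->; rewrite hE; apply: idealD; first exact: ideal_gen.
- by apply: idealMl (ideal_gen _) Tf (sub_gen fgT _); left.
- by apply: idealMl (ideal_gen _) Tg (sub_gen fgT _); right.
Qed.

Lemma gen2_regular : (forall f g, T f -> T g ->
  gen [set f; g] = gen [set (fun x => f x ^+ 2 + g x ^+ 2)]) -> regular.
Proof.
move=> gen2; apply: regular_from_pideal_sq => a Ta; have Taa := Tpp_mul Ta Ta.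
have := gen2 a zero Ta (Tpp_cst 0).
have -> : (fun x => a x ^+ 2 + 0 ^+ 2) = fmul a a.
  by apply: funext => x; rewrite /fmul expr0n addr0 expr2.
rewrite gen1E // => <-.
by apply: sub_gen; [move=> _ [|] ->; [| exact: Tpp_cst] | left].
Qed.

Lemma regular_idempotent_generator f : regular -> T f ->
  exists e, idempotent_fn e /\ gen [set f] = gen [set e].
Proof.
move=> reg Tf; have Te := Tpp_supp_ind reg Tf.
exists (supp_ind f); split; first by split => //; exact: supp_ind_idem.
rewrite !gen1E //; apply/seteqP; split => _ [r Tr <-].
  exists (fmul r f); first exact: Tpp_mul.
  by rewrite -[in RHS](supp_ind_id f); fun_ring.
by exists (fmul r (finv f)); [apply: Tpp_mul => //; exact: Tpp_finv | rewrite /supp_ind; fun_ring].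
Qed.

(* From e = r f and f = s e = s e^2 = e f we get f = r f^2. *)
Lemma idempotent_generator_regular :
  (forall f, T f -> exists e, idempotent_fn e /\ gen [set f] = gen [set e]) -> regular.
Proof.
move=> idem; apply: regular_from_pideal_sq => f Tf.
have [e [[Te ee] fe]] := idem f Tf.
have : pideal f e by rewrite -gen1E // fe; apply: sub_gen => // _ ->.
have : pideal e f by rewrite -gen1E // -fe; apply: sub_gen => // _ ->.
move=> [s Ts sef] [r Tr rfe]; exists r => //.
have fef : fmul f e = f by rewrite -[in LHS]sef -[in RHS]sef -[in RHS]ee; fun_ring.
by rewrite -[in RHS]fef -rfe; fun_ring.
Qed.

End TppRing.

Theorem theorem3p3 (R : realType) (X : topologicalType) (hT1 : @accessible_space X) :
  let T := @Tpp R X in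
  let c1 := @regular_ring R X in
  let c2 := forall P, @prime_ideal R X P -> @maximal_ideal R X P in
  let c3 := forall f, T f -> exists g, T g /\ @Zset R X f = ~` @Zset R X g in
  let c4 := forall Z, @Zpp R X Z -> exists U : set X,
              [/\ @cozero R X U, dense U & clopen_in U Z] in
  let c5 := forall I, @ideal R X I -> @z_ideal R X I in
  let c6 := forall I, @ideal R X I -> @intersection_of R X (@prime_ideal R X) I in
  let c7 := forall I, @ideal R X I -> @intersection_of R X (@maximal_ideal R X) I in
  let c8 := forall f g, T f -> T g ->
              @gen R X [set f; g] = @gen R X [set (fun x => f x ^+ 2 + g x ^+ 2)] in
  let c9 := forall f, T f -> exists e,
              @idempotent_fn R X e /\ @gen R X [set f] = @gen R X [set e] in
  (c1 <-> c2) /\ (c1 <-> c3) /\ (c1 <-> c4) /\ (c1 <-> c5) /\ (c1 <-> c6) /\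
  (c1 <-> c7) /\ (c1 <-> c8) /\ (c1 <-> c9).
Proof.
move=> T c1 c2 c3 c4 c5 c6 c7 c8 c9.
split; first by split=> [reg P|]; [exact: regular_prime_maximal | exact: prime_maximal_regular].
split; first by split=> [reg f|]; [exact: regular_Zset_complement | exact: Zset_complement_regular].
split; first by split=> [reg Z|]; [exact: regular_Zset_clopen | exact: Zset_clopen_regular].
split; first by split=> [reg I|]; [exact: regular_z_ideal | exact: z_ideal_regular].
split.
  by split=> [reg I|]; [exact: regular_intersection_prime | exact: intersection_prime_regular].
split.
  split=> [reg I|]; first exact: regular_intersection_maximal.
  by apply: intersection_prime_regular => J; exact: maximal_prime.
split; first by split=> [reg f g|]; [exact: regular_gen2 | exact: gen2_regular].
by split=> [reg f|]; [exact: regular_idempotent_generator | exact: idempotent_generator_regular].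
Qed.
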